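(* Let $\pi$ be a prior satisfying conditions (MD) and (MZ) below, and suppose moreover that the function $f$ with $\pi_\eta(\eta\mid\theta)=f(\eta'W(P)\eta\mid\theta,W(P))$ satisfies: $f(u\mid\theta,W(P))=f(u)$ for all $(W(P),\theta)$, where $f$ is strictly positive, continuous and non-increasing in $u\ge0$, and $\lim_{u\to\infty}f(au)/f(u)=0$ for every $a>1$. (MD): the conditional prior of $(Y(P),\theta)$ given $(X(P),W(P))$ is absolutely continuous with full support and a continuous density for all $(X(P),W(P))$, and for all $P,\theta$, $\pi(\theta\mid P)=h(Q_W(\theta;P),W(P),\theta)c(P)$ for some non-negative $h$ twice continuously differentiable in its first argument and continuously differentiable in $\theta$, with $c(P)$ a normalizing constant. (MZ): $\pi_\eta(\eta\mid\theta)=\pi(\eta\mid\theta,W(P),X(P))$ is strictly positive and twice continuously differentiable in $(\eta,\theta)$, does not depend on $X(P)$, satisfies $\int\eta\,\pi_\eta(\eta\mid\theta)d\eta=0$, and $(Y(P),X(P))$ can be varied freely while holding $W(P)$ fixed. For $c>0$ and any continuous density $\pi_\theta$ on $\mathbb R^p$ with $\pi_\theta(\theta_W(P))>0$, define \[ \pi_c(\theta\mid P)=\frac{\pi_\theta(\theta)\,f\bigl(\tfrac1cQ_W(\theta;P)\bigr)}{\int\pi_\theta(\vartheta)\,f\bigl(\tfrac1cQ_W(\vartheta;P)\bigr)d\vartheta}. \] Then $\pi_c(\cdot\mid P)$ concentrates on $\theta_W(P)$ as $c\to0$: for every $\varepsilon>0$, with $B_\varepsilon(\theta_W(P))=\{\theta:\|\theta-\theta_W(P)\|<\varepsilon\}$,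 \[ \lim_{c\to0}\int1\{\theta\notin B_\varepsilon(\theta_W(P))\}\,d\pi_c(\theta\mid P)=0. \]
   Context: Let $\mathcal D$ be a set and $\mathcal P$ a set of probability distributions on $\mathcal D$; $P\in\mathcal P$ is observed. Fix integers $k>p\ge1$. Let $Y:\mathcal P\to\mathbb R^k$ and $X:\mathcal P\to\mathbb R^{k\times p}$ be known functions with $X(P)$ of full column rank, and $W(P)$ a known symmetric positive definite $k\times k$ matrix. Define $g(\theta;P)=Y(P)-X(P)\theta$, $Q_W(\theta;P)=g(\theta;P)'W(P)g(\theta;P)$, and the pseudo-true value $\theta_W(P)=\arg\min_\theta Q_W(\theta;P)=(X(P)'W(P)X(P))^{-1}X(P)'W(P)Y(P)$. A prior $\pi$ is a joint distribution over $(P,\theta)\in\mathcal P\times\mathbb R^p$, with $\eta=g(\theta;P)$; $\pi(\theta\mid P)$ is the posterior density of $\theta$. Under (MD) and (MZ) the conditional prior density of $\eta$ has the form $\pi_\eta(\eta\mid\theta)=f(\eta'W(P)\eta\mid\theta,W(P))$. The posterior $\pi_c$ corresponds to the scale family of misspecification priors $\pi_{\eta,c}(\eta\mid\theta)\propto f(\tfrac1c\eta'W(P)\eta)$ with prior $\pi_\theta$ on $\theta$. *)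

From HB Require Import structures.
From mathcomp Require Import all_boot all_order all_algebra.
From mathcomp Require Import all_classical all_reals all_analysis.
Set Implicit Arguments. Unset Strict Implicit. Unset Printing Implicit Defensive.
Import Order.TTheory GRing.Theory Num.Theory.
Import numFieldNormedType.Exports.
Local Open Scope classical_set_scope.
Local Open Scope ring_scope.

(* Lebesgue integral over R^n of a nonnegative (extended-real valued)
   function, written as the iterated one-dimensional Lebesgue integral
   (equal to the n-dimensional Lebesgue integral by Tonelli for the
   nonnegative measurable integrands used here). *)
Fixpoint lebRn (R : realType) (n : nat) : ('cV[R]_n -> \bar R) -> \bar R :=
  match n return ('cV[R]_n -> \bar R) -> \bar R with
  | 0 => fun g => g 0
  | n'.+1 => fun g =>
      (\int[@lebesgue_measure R]_x
         lebRn (fun v : 'cV[R]_n' => g (col_mx (x%:M : 'cV[R]_1) v)))%E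
  end.

Definition enorm (R : realType) (n : nat) (v : 'cV[R]_n) : R :=
  Num.sqrt (\sum_(i < n) v i 0 ^+ 2).

Definition gmom (R : realType) (k p : nat) (Y : 'cV[R]_k) (X : 'M[R]_(k, p))
  (theta : 'cV[R]_p) : 'cV[R]_k := Y - X *m theta.

Definition QW (R : realType) (k p : nat) (Y : 'cV[R]_k) (X : 'M[R]_(k, p))
  (W : 'M[R]_k) (theta : 'cV[R]_p) : R :=
  ((gmom Y X theta)^T *m W *m gmom Y X theta) 0 0.

Definition thetaW (R : realType) (k p : nat) (Y : 'cV[R]_k) (X : 'M[R]_(k, p))
  (W : 'M[R]_k) : 'cV[R]_p :=
  invmx (X^T *m W *m X) *m (X^T *m W *m Y).

Definition post_kernel (R : realType) (k p : nat) (Y : 'cV[R]_k)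
  (X : 'M[R]_(k, p)) (W : 'M[R]_k) (f : R -> R) (pitheta : 'cV[R]_p -> R)
  (c : R) (theta : 'cV[R]_p) : R :=
  pitheta theta * f (c^-1 * QW Y X W theta).

Definition post_mass_outside (R : realType) (k p : nat) (Y : 'cV[R]_k)
  (X : 'M[R]_(k, p)) (W : 'M[R]_k) (f : R -> R) (pitheta : 'cV[R]_p -> R)
  (eps c : R) : R :=
  fine (lebRn (fun theta =>
          ((if enorm (theta - thetaW Y X W) < eps then 0 else 1)
           * post_kernel Y X W f pitheta c theta)%:E))
  / fine (lebRn (fun theta => (post_kernel Y X W f pitheta c theta)%:E)).

From HB Require Import structures.
From mathcomp Require Import all_boot all_order all_algebra.
From mathcomp Require Import all_classical all_reals all_analysis.
From mathcomp Require Import ring lra.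
Import Order.TTheory GRing.Theory Num.Theory.
Import numFieldNormedType.Exports.
Import HBNNSimple.
Set Implicit Arguments. Unset Strict Implicit. Unset Printing Implicit Defensive.
Local Open Scope classical_set_scope.
Local Open Scope ring_scope.

(* Completing the square at the weighted least-squares solution theta_W gives
   Q_W(theta) = Q_W(theta_W) + (theta - theta_W)' X'WX (theta - theta_W), with
   X'WX positive definite.  Hence Q_W >= Q_W(theta_W) + delta outside the
   eps-ball, while on a small cube around theta_W we have
   Q_W <= Q_W(theta_W) + delta/2 and pi_theta >= pi_theta(theta_W)/2.  The
   posterior mass outside the ball is therefore at most
   f((Q_W(theta_W) + delta)/c) / (m f((Q_W(theta_W) + delta/2)/c)) for a
   constant m > 0, and the tail condition on f sends this to 0 as c -> 0. *)

(* The iterated integrands of [lebRn] are not known to be measurable, so the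
   two facts below are proved from the definition of the integral as a
   supremum over simple functions. *)
Section integral_nonmeasurable.
Local Open Scope ereal_scope.
Context d (T : measurableType d) (R : realType) (mu : {measure set T -> \bar R}).
Implicit Types f g : T -> \bar R.

Lemma ge0_le_integral_nonmeas f g : (forall x, 0 <= f x) -> (forall x, f x <= g x) ->
  \int[mu]_x f x <= \int[mu]_x g x.
Proof.
move=> f0 fg; have g0 x : 0 <= g x by apply: le_trans (fg x).
rewrite !ge0_integralTE//; apply: ereal_sup_le => _ [h /= hf <-].
by exists h => //= x; apply: le_trans (hf x) (fg x).
Qed.

Let ge0_integralZl_le (k : R) f : (0 < k)%R -> (forall x, 0 <= f x) ->
  \int[mu]_x (k%:E * f x) <= k%:E * \int[mu]_x f x.
Proof.
move=> k0 f0; have kf0 x : 0 <= k%:E * f x by rewrite mule_ge0// lee_fin ltW.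
rewrite !ge0_integralTE//; apply: ge_ereal_sup => _ [h /= hf <-].
have ki0 : (0 <= k^-1)%R by rewrite invr_ge0 ltW.
pose h' := scale_nnsfun h ki0.
have -> : sintegral mu h = k%:E * sintegral mu h'.
  rewrite (_ : sintegral mu h' = sintegral mu (cst k^-1 \* h)%R) //.
  by rewrite sintegralrM muleA -EFinM divff ?gt_eqF// mul1e.
rewrite lee_pmul2l ?lte_fin//; apply: ereal_sup_ubound; exists h' => //= x.
by rewrite -(@lee_pmul2l _ k%:E) ?lte_fin// -EFinM mulrA divff ?gt_eqF// mul1r.
Qed.

Lemma ge0_integralZl_nonmeas (k : R) f : (0 <= k)%R -> (forall x, 0 <= f x) ->
  \int[mu]_x (k%:E * f x) = k%:E * \int[mu]_x f x.
Proof.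
move=> k0 f0; have [->|kn0] := eqVneq k 0%R.
  by rewrite mul0e; under eq_integral do rewrite mul0e; rewrite integral0.
have kp : (0 < k)%R by rewrite lt_neqAle eq_sym kn0.
have ki : (0 < k^-1)%R by rewrite invr_gt0.
apply/eqP; rewrite eq_le ge0_integralZl_le//=.
rewrite -(@lee_pmul2l _ k^-1%:E) ?lte_fin// muleA -EFinM mulVf ?gt_eqF// mul1e.
have kf0 x : 0 <= k%:E * f x by rewrite mule_ge0// lee_fin.
have := ge0_integralZl_le ki kf0.
by under eq_integral do rewrite muleA -EFinM mulVf ?gt_eqF// mul1e.
Qed.

End integral_nonmeasurable.

Section iterated_integral.
Context (R : realType).
Local Open Scope ereal_scope.

Lemma lebRn_ge0 n (g : 'cV[R]_n -> \bar R) : (forall t, 0 <= g t) -> 0 <= lebRn g.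
Proof.
elim: n g => [|n IH] g g0 /=; first exact: g0.
by apply: integral_ge0 => x _; apply: IH.
Qed.

Lemma le_lebRn n (g h : 'cV[R]_n -> \bar R) : (forall t, 0 <= g t) ->
  (forall t, g t <= h t) -> lebRn g <= lebRn h.
Proof.
elim: n g h => [|n IH] g h g0 gh /=; first exact: gh.
apply: ge0_le_integral_nonmeas => x; first exact: lebRn_ge0.
exact: IH.
Qed.

Lemma lebRnZl n (k : R) (g : 'cV[R]_n -> \bar R) : (0 <= k)%R ->
  (forall t, 0 <= g t) -> lebRn (fun t => k%:E * g t) = k%:E * lebRn g.
Proof.
elim: n g => [|n IH] g k0 g0 //=.
under eq_integral do rewrite IH//.
by rewrite ge0_integralZl_nonmeas// => x; apply: lebRn_ge0.
Qed.

Definition cube_indic n (c : 'cV[R]_n) (s : R) (t : 'cV[R]_n) : R :=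
  \prod_(i < n) \1_(`](c i 0 - s)%R, (c i 0 + s)%R[%classic : set R) (t i 0).

Lemma integral_indic_itv (a b : R) : (a <= b)%R ->
  \int[lebesgue_measure]_x (\1_(`]a, b[%classic : set R) x)%:E = (b - a)%:E.
Proof.
move=> ab; rewrite integral_indic// setIT.
have := lebesgue_measure_itv `]a, b[%R; rewrite /= => ->; rewrite lte_fin.
by case: ltgtP ab => // ->; rewrite subrr.
Qed.

Lemma lebRn_cube n (c : 'cV[R]_n) (s : R) : (0 < s)%R ->
  lebRn (fun t => (cube_indic c s t)%:E) = ((2 * s) ^+ n)%:E.
Proof.
elim: n c => [|n IH] c s0 /=; first by rewrite /cube_indic big_ord0.
set a := c ord0 ord0.
have int_itv : \int[lebesgue_measure]_x (\1_(`](a - s)%R, (a + s)%R[%classic : set R) x)%:E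
    = (2 * s)%:E.
  by rewrite integral_indic_itv; [congr _%:E|]; lra.
transitivity (\int[lebesgue_measure]_x
    (((2 * s) ^+ n)%:E * (\1_(`](a - s)%R, (a + s)%R[%classic : set R) x)%:E)).
  apply: eq_integral => x _.
  rewrite muleC -(IH (dsubmx (c : 'cV_(1 + n))))// -lebRnZl//; last first.
    by move=> t; rewrite lee_fin prodr_ge0// => i _; rewrite indicE ler0n.
  congr lebRn; apply: funext => v; rewrite -EFinM /cube_indic big_ord_recl.
  have -> : col_mx (x%:M : 'cV[R]_1) v ord0 ord0 = x.
    by rewrite (_ : ord0 = lshift n (ord0 : 'I_1)) ?col_mxEu ?mxE//; exact: val_inj.
  congr (_ * _)%:E; apply: eq_bigr => i _.
  have -> : lift ord0 i = rshift 1 i by exact: val_inj.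
  by rewrite (@col_mxEd _ 1 n 1) mxE.
rewrite ge0_integralZl_nonmeas => [||x]; last 2 first.
- by rewrite exprn_ge0// mulr_ge0// ltW.
- by rewrite lee_fin indicE ler0n.
rewrite (_ : \int[_]_x _ = (2 * s)%:E); last exact: int_itv.
by rewrite -EFinM -exprSr.
Qed.

Lemma lebRn_ge_cube n (g : 'cV[R]_n -> R) (c : 'cV[R]_n) (s a : R) :
  (0 < s)%R -> (0 <= a)%R -> (forall t, 0 <= g t)%R ->
  (forall t : 'cV[R]_n, (forall i, `|t i 0 - c i 0| < s) -> a <= g t)%R ->
  (a * (2 * s) ^+ n)%:E <= lebRn (fun t => (g t)%:E).
Proof.
move=> s0 a0 g0 ga.
have cube0 t : (0 <= cube_indic c s t)%R.
  by rewrite prodr_ge0// => i _; rewrite indicE ler0n.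
rewrite EFinM -(lebRn_cube c s0) -lebRnZl => [||t]; last 2 first.
- exact: a0.
- by rewrite lee_fin.
apply: le_lebRn => t; first by rewrite -EFinM lee_fin mulr_ge0.
rewrite -EFinM lee_fin /cube_indic.
have [/forallP near|/forallPn[i far]] := boolP [forall i, `|t i 0 - c i 0| < s]%R.
  rewrite big1 ?mulr1 ?ga// => i _.
  by rewrite indicE mem_set//= in_itv/= -ltr_distl.
rewrite (bigD1 i)//= indicE memNset ?mul0r ?mulr0//=.
by rewrite in_itv/= -ltr_distl; exact/negP.
Qed.

End iterated_integral.

Section quadratic_form.
Context (R : realFieldType).

Definition qform n (A : 'M[R]_n) (u v : 'cV[R]_n) : R := (u^T *m A *m v) 0 0.

Variable n : nat.
Implicit Types (A : 'M[R]_n) (u v d : 'cV[R]_n).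

Lemma qform_sym A u v : A^T = A -> qform A u v = qform A v u.
Proof.
move=> sA; transitivity ((u^T *m A *m v)^T 0 0); first by rewrite mxE.
by rewrite !trmx_mul trmxK sA mulmxA.
Qed.

Lemma qformBl A u1 u2 v : qform A (u1 - u2) v = qform A u1 v - qform A u2 v.
Proof. by rewrite /qform linearB/= !mulmxBl !mxE. Qed.

Lemma qformBr A u v1 v2 : qform A u (v1 - v2) = qform A u v1 - qform A u v2.
Proof. by rewrite /qform !mulmxBr !mxE. Qed.

Lemma qformZl A a u v : qform A (a *: u) v = a * qform A u v.
Proof. by rewrite /qform linearZ/= -!scalemxAl mxE. Qed.

Lemma qformZr A a u v : qform A u (a *: v) = a * qform A u v.
Proof. by rewrite /qform -!scalemxAr mxE. Qed.

Lemma qform_expand A u v t : A^T = A ->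
  qform A (u - t *: v) (u - t *: v) =
  qform A u u - 2 * t * qform A u v + t ^+ 2 * qform A v v.
Proof.
move=> sA; rewrite !(qformBl, qformBr, qformZl, qformZr) [qform A v u]qform_sym//.
by ring.
Qed.

Lemma qform_mulmx m (B : 'M[R]_m) (X : 'M[R]_(m, n)) u v :
  qform B (X *m u) (X *m v) = qform (X^T *m B *m X) u v.
Proof. by rewrite /qform trmx_mul !mulmxA. Qed.

Lemma qform1 u v : qform 1%:M u v = \sum_i u i 0 * v i 0.
Proof.
rewrite /qform mulmx1 !mxE; apply: eq_bigr => i _.
by rewrite mxE; congr (_ * _); congr (_ _ _); apply: val_inj; rewrite /= ?ord1.
Qed.

Lemma qform1_ge0 d : 0 <= qform 1%:M d d.
Proof. by rewrite qform1 sumr_ge0// => i _; rewrite -expr2 sqr_ge0. Qed.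

Definition mx_abs_sum A : R := \sum_i \sum_j `|A i j|.

Lemma ler_norm_qform A d : `|qform A d d| <= mx_abs_sum A * qform 1%:M d d.
Proof.
have le_sq i : d i 0 ^+ 2 <= qform 1%:M d d.
  rewrite qform1 (bigD1 i)//= -expr2 lerDl.
  by apply: sumr_ge0 => j _; rewrite -expr2 sqr_ge0.
have le_prod i j : `|d i 0| * `|d j 0| <= qform 1%:M d d.
  wlog ij : i j / `|d i 0| <= `|d j 0|.
    by move=> wl; have [/wl//|/ltW/wl] := leP `|d i 0| `|d j 0|; rewrite mulrC.
  by apply: le_trans (le_sq j); rewrite -real_normK ?num_real// ler_wpM2r.
set S := qform 1%:M d d.
rewrite /mx_abs_sum exchange_big/= big_distrl/= /qform mxE.
apply: le_trans (ler_norm_sum _ _ _) _; apply: ler_sum => j _.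
rewrite mxE big_distrl/= big_distrl/=; apply: le_trans (ler_norm_sum _ _ _) _.
apply: ler_sum => i _.
by rewrite !mxE normrM normrM mulrAC mulrC ler_wpM2l.
Qed.

Lemma qform_coercive A u : A^T = A -> (forall v, 0 <= qform A v v) ->
  A \in unitmx -> qform 1%:M u u <= (1 + mx_abs_sum (invmx A)) * qform A u u.
Proof.
move=> sA psdA uA; set C := mx_abs_sum (invmx A); set b := invmx A *m u.
have Ab : A *m b = u by rewrite mulmxA mulmxV// mul1mx.
have Aub : qform A u b = qform 1%:M u u by rewrite /qform -mulmxA Ab mulmx1.
have Abb : qform A b b <= C * qform 1%:M u u.
  rewrite /qform -mulmxA Ab trmx_mul trmx_inv sA.
  exact: le_trans (ler_norm _) (ler_norm_qform _ _).
have C0 : 0 <= C by rewrite sumr_ge0// => i _; rewrite sumr_ge0.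
(* positivity of A at (1 + C) u - A^-1 u *)
have := qform1_ge0 u; have := psdA ((1 + C) *: u - b).
rewrite qformBl !qformBr !qformZl !qformZr [qform A b u]qform_sym// Aub.
nra.
Qed.

End quadratic_form.

Lemma near_cubeP (R : realFieldType) n (t0 : 'cV[R]_n) (P : 'cV[R]_n -> Prop) :
  (\forall t \near t0, P t) <->
  exists2 s, 0 < s & forall t : 'cV[R]_n, (forall i, `|t i 0 - t0 i 0| < s) -> P t.
Proof.
split=> [/nbhs_ballP|] [s s0 sP]; [exists s => // t|apply/nbhs_ballP; exists s => // t].
  by move=> near; apply: sP; split=> // i j; rewrite ord1 /ball/= distrC.
by move=> [_ near]; apply: sP => i; rewrite distrC; exact: near.
Qed.

Lemma sqr_enorm (R : realType) n (u : 'cV[R]_n) : enorm u ^+ 2 = qform 1%:M u u.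
Proof.
rewrite /enorm sqr_sqrtr ?sumr_ge0// => [|i _]; last exact: sqr_ge0.
by rewrite qform1; under eq_bigr do rewrite expr2.
Qed.

Section weighted_least_squares.
Context (R : realType) (k p : nat) (Y : 'cV[R]_k) (X : 'M[R]_(k, p)) (W : 'M[R]_k).
Hypothesis rankX : \rank X = p.
Hypothesis symW : W^T = W.
Hypothesis posW : forall v : 'cV[R]_k, v != 0 -> 0 < qform W v v.

Local Notation M := (X^T *m W *m X).
Local Notation tW := (thetaW Y X W).

Lemma qformW_ge0 v : 0 <= qform W v v.
Proof.
by have [->|/posW/ltW//] := eqVneq v 0; rewrite /qform mulmx0 mxE.
Qed.

Lemma symM : M^T = M.
Proof. by rewrite !trmx_mul trmxK symW mulmxA. Qed.

Lemma qformM_ge0 v : 0 <= qform M v v.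
Proof. by rewrite -qform_mulmx qformW_ge0. Qed.

Lemma normal_mx_unit : M \in unitmx.
Proof.
rewrite -row_free_unit; apply: inj_row_free => v vM0.
have XvT0 : X *m v^T = 0.
  apply/eqP; apply: contraTT isT => /posW.
  by rewrite qform_mulmx /qform trmxK vM0 mul0mx mxE ltxx.
apply: trmx_inj; rewrite trmx0; apply: (@row_full_inj _ _ _ 1 X).
  by rewrite /row_full rankX.
by rewrite XvT0 mulmx0.
Qed.

Lemma normal_eq : X^T *m W *m gmom Y X tW = 0.
Proof.
rewrite /gmom mulmxBr mulmxA /thetaW mulmxA mulmxV ?normal_mx_unit// mul1mx.
exact: subrr.
Qed.

Lemma QW_decomp theta :
  QW Y X W theta = QW Y X W tW + qform M (theta - tW) (theta - tW).
Proof.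
have -> : QW Y X W theta = qform W (gmom Y X theta) (gmom Y X theta) by [].
have -> : gmom Y X theta = gmom Y X tW - 1 *: (X *m (theta - tW)).
  by rewrite scale1r /gmom mulmxBr opprB addrA subrK.
have cross v : qform W (X *m v) (gmom Y X tW) = 0.
  by rewrite /qform trmx_mul -!mulmxA [X^T *m (W *m _)]mulmxA normal_eq mulmx0 mxE.
rewrite qform_expand// qform_mulmx [qform W _ (X *m _)]qform_sym// cross.
by rewrite mulr0 subr0 expr1n mul1r.
Qed.

Lemma QW_ge_outside_ball eps : 0 < eps ->
  exists2 delta, 0 < delta &
    forall theta, eps <= enorm (theta - tW) -> QW Y X W tW + delta <= QW Y X W theta.
Proof.
move=> eps0; set C := mx_abs_sum (invmx M).
have C1 : 0 < 1 + C by rewrite ltr_pwDl// sumr_ge0// => i _; rewrite sumr_ge0.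
exists (eps ^+ 2 / (1 + C)) => [|theta le_eps]; first by rewrite divr_gt0 ?exprn_gt0.
rewrite [QW _ _ _ theta]QW_decomp lerD2l ler_pdivrMr// mulrC.
apply: le_trans (qform_coercive _ symM qformM_ge0 normal_mx_unit).
by rewrite -sqr_enorm !expr2; apply: ler_pM => //; exact: ltW.
Qed.

Lemma QW_near_min delta : 0 < delta ->
  \forall theta \near tW, QW Y X W theta <= QW Y X W tW + delta.
Proof.
move=> delta0; apply/near_cubeP.
set K := mx_abs_sum M * p%:R + 1.
have K0 : 0 < K by rewrite ltr_pwDr// mulr_ge0// sumr_ge0// => i _; rewrite sumr_ge0.
set s := Num.min 1 (delta / K).
have s0 : 0 < s by rewrite lt_min ltr01 divr_gt0.
exists s => // theta near; rewrite [QW _ _ _ theta]QW_decomp lerD2l.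
set u := theta - tW.
have le_u : qform 1%:M u u <= p%:R * s.
  rewrite mulr_natl -[p in s *+ p]card_ord -sumr_const qform1.
  apply: ler_sum => i _.
  have ui : `|u i 0| < s by move: (near i); rewrite /u !mxE.
  rewrite -expr2 -real_normK ?num_real// expr2.
  apply: le_trans (ler_pM _ _ (ltW ui) (ltW ui)) _ => //.
  by rewrite ger_pMr// ge_min lexx.
apply: le_trans (ler_norm _) _; apply: le_trans (ler_norm_qform _ _) _.
apply: le_trans (ler_wpM2l _ le_u) _; first by rewrite sumr_ge0// => i _; rewrite sumr_ge0.
rewrite mulrA; apply: (@le_trans _ _ (K * s)).
  by apply: ler_wpM2r; [exact: ltW|rewrite lerDl].
by rewrite mulrC -ler_pdivlMr// ge_min lexx orbT.
Qed.

End weighted_least_squares.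

Lemma invrM_cvgy (R : realType) (B : R) : 0 < B -> (fun c => c^-1 * B) @ 0^'+ --> +oo.
Proof.
move=> B0; apply/gtr0_cvgV0.
  by near=> c; rewrite mulr_gt0 ?invr_gt0//; near: c; exact: nbhs_right_gt.
rewrite [X in X @ _ --> _](_ : _ = ( *%R^~ B^-1)); last first.
  by apply: funext => c; rewrite /= invfM invrK.
rewrite -[X in _ --> X](mul0r B^-1); apply: cvgMl.
by apply: (@cvg_at_right_filter R R id 0); exact: cvg_id.
Unshelve. all: by end_near.
Qed.

Lemma tail_ratio_cvg (R : realType) (f : R -> R) (A B : R) : 0 < B -> B < A ->
  (forall a, 1 < a -> (fun u => f (a * u) / f u) @ +oo --> 0) ->
  (fun c => f (c^-1 * A) / f (c^-1 * B)) @ 0^'+ --> 0.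
Proof.
move=> B0 BA tail.
have a1 : 1 < A / B by rewrite ltr_pdivlMr// mul1r.
suff -> : (fun c => f (c^-1 * A) / f (c^-1 * B)) =
    (fun u => f (A / B * u) / f u) \o (fun c => c^-1 * B).
  exact: cvg_comp (invrM_cvgy B0) (tail _ a1).
by apply: funext => c /=; rewrite mulrCA divfK ?gt_eqF.
Qed.

Lemma fine_div_le (R : realType) (x y : \bar R) (a b : R) :
  (0 <= x)%E -> (x <= a%:E)%E -> 0 < b -> (b%:E <= y)%E ->
  0 <= fine x / fine y <= a / b.
Proof.
case: x => [r| |]//; rewrite !lee_fin => r0 ra b0.
have a0 : 0 <= a := le_trans r0 ra.
case: y => [y| |]//=; last by rewrite invr0 mulr0 lexx divr_ge0// ltW.
rewrite lee_fin => bley; have y0 : 0 < y := lt_le_trans b0 bley.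
rewrite divr_ge0 ?(ltW y0)//=; apply: (@le_trans _ _ (a / y)).
  by rewrite ler_wpM2r// invr_ge0 ltW.
by rewrite ler_wpM2l// lef_pV2.
Qed.

Section posterior_mass.
Context (R : realType) (k p : nat) (Y : 'cV[R]_k) (X : 'M[R]_(k, p)) (W : 'M[R]_k).
Context (f : R -> R) (pitheta : 'cV[R]_p -> R).
Hypothesis f_gt0 : forall u, 0 <= u -> 0 < f u.
Hypothesis f_noninc : forall u v, 0 <= u -> u <= v -> f v <= f u.
Hypothesis pi_ge0 : forall theta, 0 <= pitheta theta.
Hypothesis pi_mass1 : lebRn (fun theta => (pitheta theta)%:E) = 1%E.
Hypothesis QW_ge0 : forall theta, 0 <= QW Y X W theta.

Local Notation kernel := (post_kernel Y X W f pitheta).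

Lemma kernel_ge0 c theta : 0 < c -> 0 <= kernel c theta.
Proof.
move=> c0; apply: mulr_ge0 => //; apply/ltW/f_gt0/mulr_ge0 => //.
by rewrite invr_ge0 ltW.
Qed.

Lemma lebRn_kernel_outside_le c (t0 : 'cV[R]_p) eps A : 0 < c -> 0 <= A ->
  (forall theta, eps <= enorm (theta - t0) -> A <= QW Y X W theta) ->
  (lebRn (fun theta =>
     ((if enorm (theta - t0) < eps then 0 else 1) * kernel c theta)%:E)
   <= (f (c^-1 * A))%:E)%E.
Proof.
move=> c0 A0 QA; have cA0 : 0 <= c^-1 * A by rewrite mulr_ge0// invr_ge0 ltW.
rewrite -[X in (_ <= X)%E]mule1 -pi_mass1 -lebRnZl => [||theta]; last 2 first.
- exact/ltW/f_gt0.
- by rewrite lee_fin.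
apply: le_lebRn => theta.
  by rewrite lee_fin mulr_ge0 ?kernel_ge0//; case: ifP.
rewrite -EFinM lee_fin; case: ltP => [_|/QA le_AQ].
  by rewrite mul0r mulr_ge0// ltW// f_gt0.
rewrite mul1r mulrC /post_kernel; apply: ler_wpM2l => //.
by apply: f_noninc => //; apply: ler_wpM2l => //; rewrite invr_ge0 ltW.
Qed.

Lemma lebRn_kernel_ge c (t0 : 'cV[R]_p) s B : 0 < c -> 0 < s -> 0 <= B ->
  (forall theta : 'cV[R]_p, (forall i, `|theta i 0 - t0 i 0| < s) ->
     QW Y X W theta <= B /\ pitheta t0 / 2 <= pitheta theta) ->
  (((pitheta t0 / 2 * f (c^-1 * B)) * (2 * s) ^+ p)%:E
   <= lebRn (fun theta => (kernel c theta)%:E))%E.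
Proof.
move=> c0 s0 B0 near_t0; have ci0 : 0 <= c^-1 by rewrite invr_ge0 ltW.
apply: lebRn_ge_cube => // [|theta|theta /near_t0[le_QB le_pi]].
- by rewrite mulr_ge0 ?divr_ge0// ltW// f_gt0// mulr_ge0.
- exact: kernel_ge0.
- rewrite /post_kernel; apply: ler_pM => //.
  + by rewrite divr_ge0.
  + exact/ltW/f_gt0/mulr_ge0.
  + by apply: f_noninc; [exact: mulr_ge0|exact: ler_wpM2l].
Qed.

Lemma post_mass_outside_le c eps s A B :
  0 < c -> 0 < s -> 0 < B -> B <= A -> 0 < pitheta (thetaW Y X W) ->
  (forall theta, eps <= enorm (theta - thetaW Y X W) -> A <= QW Y X W theta) ->
  (forall theta : 'cV[R]_p, (forall i, `|theta i 0 - thetaW Y X W i 0| < s) ->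
     QW Y X W theta <= B /\ pitheta (thetaW Y X W) / 2 <= pitheta theta) ->
  0 <= post_mass_outside Y X W f pitheta eps c <=
    f (c^-1 * A) / f (c^-1 * B) / (pitheta (thetaW Y X W) / 2 * (2 * s) ^+ p).
Proof.
move=> c0 s0 B0 BA pi_tW far near.
rewrite -mulrA -invfM.
apply: fine_div_le.
- by apply: lebRn_ge0 => theta; rewrite lee_fin mulr_ge0 ?kernel_ge0//; case: ifP.
- by apply: lebRn_kernel_outside_le; rewrite ?(le_trans (ltW B0)).
- by rewrite !mulr_gt0 ?exprn_gt0 ?mulr_gt0 ?f_gt0 ?mulr_ge0 ?invr_ge0 ?ltW.
- by rewrite mulrA (mulrC (f _)); apply: lebRn_kernel_ge; rewrite ?ltW.
Qed.

End posterior_mass.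

Theorem proposition2 (R : realType) (k p : nat)
  (Y : 'cV[R]_k) (X : 'M[R]_(k, p)) (W : 'M[R]_k)
  (f : R -> R) (pitheta : 'cV[R]_p -> R) :
  (1 <= p)%N -> (p < k)%N ->
  \rank X = p ->
  W^T = W ->
  (forall v : 'cV[R]_k, v != 0 -> 0 < (v^T *m W *m v) 0 0) ->
  (forall u, 0 <= u -> 0 < f u) ->
  {within `[0, +oo[, continuous f} ->
  (forall u v, 0 <= u -> u <= v -> f v <= f u) ->
  (forall a, 1 < a -> (fun u => f (a * u) / f u) @ +oo --> 0) ->
  continuous pitheta ->
  (forall theta, 0 <= pitheta theta) ->
  lebRn (fun theta => (pitheta theta)%:E) = 1%E ->
  0 < pitheta (thetaW Y X W) ->
  forall eps, 0 < eps ->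
    post_mass_outside Y X W f pitheta eps c @[c --> 0^'+] --> 0.
Proof.
move=> _ _ rankX symW posW f_gt0 _ f_noninc f_tail pi_cont pi_ge0 pi_mass1 pi_tW eps eps0.
set tW := thetaW Y X W; set Q0 := QW Y X W tW.
have QW_ge0 theta : 0 <= QW Y X W theta := qformW_ge0 posW (gmom Y X theta).
have [delta delta0 far_tW] := QW_ge_outside_ball Y rankX symW posW eps0.
have [s s0 near_tW] : exists2 s, 0 < s & forall theta : 'cV[R]_p,
    (forall i, `|theta i 0 - tW i 0| < s) ->
    QW Y X W theta <= Q0 + delta / 2 /\ pitheta tW / 2 <= pitheta theta.
  apply/near_cubeP; near=> theta; split; near: theta.
    by apply: QW_near_min; rewrite ?divr_gt0.
  by apply: cvgr_ge (pi_cont tW) _ _; rewrite ltr_pdivrMr// ltr_pMr ?ltr1n.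
have Q00 : 0 <= Q0 := QW_ge0 tW.
have B0 : 0 < Q0 + delta / 2 by lra.
have BA : Q0 + delta / 2 < Q0 + delta by lra.
have := cvgMl (b := (pitheta tW / 2 * (2 * s) ^+ p)^-1) (tail_ratio_cvg B0 BA f_tail).
rewrite mul0r => ratio0; apply: squeeze_cvgr; last 2 first.
- exact: cvg_cst.
- exact: ratio0.
near=> c; apply: post_mass_outside_le => //; exact: ltW.
Unshelve. all: by end_near.
Qed.
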